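(* Let $(X,d_X)$ be a metric space and $(Y,d_Y)$ a metric space with the coarse Stone property, i.e. $\Delta_Y^{(c)}(R)<\infty$ for all $R\in[0,\infty)$. If there exists a coarse embedding $f\colon X\to Y$, then $X$ has the coarse Stone property, i.e. $\Delta_X^{(c)}(R)<\infty$ for all $R\in[0,\infty)$. If $f$ is a coarse Lipschitz embedding and there are $C,D\in[0,\infty)$ such that $\Delta_Y^{(c)}(R)\leq CR+D$ for all $R\in[0,\infty)$, then there are $C',D'\in[0,\infty)$ such that $\Delta_X^{(c)}(R)<C'R+D'$ for all $R\in[0,\infty)$. If, in particular, $f$ is a bi-Lipschitz embedding and $D=0$, then $\Delta_X^{(c)}(R)\leq C\,\mathrm{dist}(f)\,R$ for all $R\in[0,\infty)$.
   Context: For a metric space $X$ and a cover $\mathcal{U}$ of $X$: $\mathrm{diam}(\mathcal{U})=\sup_{U\in\mathcal{U}}\mathrm{diam}(U)$; $\mathcal{L}(\mathcal{U})=\sup\{d\in[0,\infty): \text{every } E\subseteq X \text{ with } \mathrm{diam}(E)<d \text{ is contained in some } U\in\mathcal{U}\}$; $\mathcal{U}$ is point-finite if each point lies in only finitely many members. $\Delta_X^{(c)}(R)=\inf\{\mathrm{diam}(\mathcal{U}): \mathcal{U} \text{ a point-finite cover of } X,\ \mathcal{L}(\mathcal{U})\geq R\}$. For $f\colon X\to Y$: $\omega_f(t)=\sup\{d_Y(f(x_1),f(x_2)): d_X(x_1,x_2)\leq t\}$, $\rho_f(t)=\inf\{d_Y(f(x_1),f(x_2)): d_X(x_1,x_2)\geq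 t\}$; $f$ is a coarse embedding if $\omega_f(t)<\infty$ for all $t$ and $\lim_{t\to\infty}\rho_f(t)=\infty$; a coarse Lipschitz embedding if there are $A\geq1$, $B\geq0$ with $\omega_f(t)\leq At+B$ and $\rho_f(t)\geq t/A-B$ for all $t$; a bi-Lipschitz embedding if this holds with $B=0$. $\mathrm{Lip}(f)=\sup_{x_1\neq x_2} d_Y(f(x_1),f(x_2))/d_X(x_1,x_2)$ and for injective $f$, $\mathrm{dist}(f)=\mathrm{Lip}(f)\mathrm{Lip}(f^{-1})$. *)

From HB Require Import structures.
From mathcomp Require Import all_boot all_order all_algebra.
From mathcomp Require Import all_classical all_reals ereal.
Set Implicit Arguments. Unset Strict Implicit. Unset Printing Implicit Defensive.
Import Order.TTheory GRing.Theory Num.Theory.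
Local Open Scope classical_set_scope.
Local Open Scope ring_scope.

Section MetricDefs.
Context {R : realType}.

Definition is_metric {T : Type} (d : T -> T -> R) : Prop :=
  [/\ (forall x y, 0 <= d x y),
      (forall x y, d x y = 0 <-> x = y),
      (forall x y, d x y = d y x) &
      (forall x y z, d x z <= d x y + d y z)].

(* diam(E) = sup of distances, with diam(empty) = 0 *)
Definition diam {T : Type} (d : T -> T -> R) (E : set T) : \bar R :=
  ereal_sup ([set 0%E] `|`
             [set r | exists x y, [/\ E x, E y & r = (d x y)%:E]]).

(* diam(U) = sup_{U in U} diam(U)  (0 for the empty family) *)
Definition diam_cover {T : Type} (d : T -> T -> R) (U : set (set T)) : \bar R :=
  ereal_sup ([set 0%E] `|` [set diam d V | V in U]).

Definition lebesgue_number {T : Type} (d : T -> T -> R) (U : set (set T))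
  : \bar R :=
  ereal_sup [set r%:E | r in [set r : R | 0 <= r /\
     (forall E : set T, (diam d E < r%:E)%E -> exists2 V, U V & E `<=` V)]].

Definition is_cover {T : Type} (U : set (set T)) : Prop :=
  forall x : T, exists2 V, U V & V x.

Definition point_finite {T : Type} (U : set (set T)) : Prop :=
  forall x : T, finite_set [set V | U V /\ V x].

(* Delta^{(c)}_X(R0); inf of the empty set is +oo *)
Definition Delta_c {T : Type} (d : T -> T -> R) (R0 : R) : \bar R :=
  ereal_inf [set diam_cover d U | U in
    [set U | [/\ is_cover U, point_finite U & (R0%:E <= lebesgue_number d U)%E]]].

Definition coarse_stone {T : Type} (d : T -> T -> R) : Prop :=
  forall R0 : R, 0 <= R0 -> (Delta_c d R0 < +oo)%E.

Definition omega_f {X Y : Type} (dX : X -> X -> R) (dY : Y -> Y -> R)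
  (f : X -> Y) (t : R) : \bar R :=
  ereal_sup [set r | exists x1 x2, [/\ dX x1 x2 <= t & r = (dY (f x1) (f x2))%:E]].

Definition rho_f {X Y : Type} (dX : X -> X -> R) (dY : Y -> Y -> R)
  (f : X -> Y) (t : R) : \bar R :=
  ereal_inf [set r | exists x1 x2, [/\ t <= dX x1 x2 & r = (dY (f x1) (f x2))%:E]].

Definition coarse_embedding {X Y : Type} (dX : X -> X -> R) (dY : Y -> Y -> R)
  (f : X -> Y) : Prop :=
  (forall t : R, 0 <= t -> (omega_f dX dY f t < +oo)%E) /\
  (forall M : R, exists t0 : R, forall t : R, t0 <= t ->
       (M%:E <= rho_f dX dY f t)%E).

Definition coarse_lipschitz_embedding {X Y : Type} (dX : X -> X -> R)
  (dY : Y -> Y -> R) (f : X -> Y) : Prop :=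
  exists A B : R, [/\ 1 <= A, 0 <= B &
    forall t : R, 0 <= t ->
      (omega_f dX dY f t <= (A * t + B)%:E)%E /\
      ((t / A - B)%:E <= rho_f dX dY f t)%E].

Definition bilipschitz_embedding {X Y : Type} (dX : X -> X -> R)
  (dY : Y -> Y -> R) (f : X -> Y) : Prop :=
  exists A : R, 1 <= A /\
    forall t : R, 0 <= t ->
      (omega_f dX dY f t <= (A * t)%:E)%E /\
      ((t / A)%:E <= rho_f dX dY f t)%E.

(* Lip(f), with Lip = 0 when there are no two distinct points *)
Definition lip {X Y : Type} (dX : X -> X -> R) (dY : Y -> Y -> R)
  (f : X -> Y) : \bar R :=
  ereal_sup ([set 0%E] `|`
    [set r | exists x1 x2, x1 <> x2 /\ r = (dY (f x1) (f x2) / dX x1 x2)%:E]).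

(* Lip(f^{-1}) for injective f, f^{-1} : f(X) -> X *)
Definition lip_inv {X Y : Type} (dX : X -> X -> R) (dY : Y -> Y -> R)
  (f : X -> Y) : \bar R :=
  ereal_sup ([set 0%E] `|`
    [set r | exists x1 x2, x1 <> x2 /\ r = (dX x1 x2 / dY (f x1) (f x2))%:E]).

Definition distortion {X Y : Type} (dX : X -> X -> R) (dY : Y -> Y -> R)
  (f : X -> Y) : \bar R := (lip dX dY f * lip_inv dX dY f)%E.

End MetricDefs.

From HB Require Import structures.
From mathcomp Require Import all_boot all_order all_algebra.
From mathcomp Require Import all_classical all_reals ereal.
From mathcomp Require Import ring lra.
Import Order.TTheory GRing.Theory Num.Theory.
Local Open Scope classical_set_scope.
Local Open Scope ring_scope.

(* Pull back along f a point-finite cover of Y whose Lebesgue number exceeds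
   the expansion of f at scale R: the preimages form a point-finite cover of X
   in which every set of diameter < R lies in some member, and the compression
   bound of f controls the diameters of the preimages.  Tracking the constants
   of the controls gives the linear bounds. *)

Section Diameters.
Context {R : realType} {T : Type} {d : T -> T -> R}.

Lemma diam_le (E : set T) (c : R) :
  0 <= c -> (forall x y, E x -> E y -> d x y <= c) -> (diam d E <= c%:E)%E.
Proof.
move=> c0 Ec; apply/ereal_supP => _ [->|[x [y [Ex Ey ->]]]].
  by rewrite lee_fin.
by rewrite lee_fin; exact: Ec.
Qed.

Lemma le_diam {E : set T} {x y} : E x -> E y -> ((d x y)%:E <= diam d E)%E.
Proof. by move=> Ex Ey; apply: ereal_sup_ubound; right; exists x, y. Qed.

Lemma diam_cover_le (U : set (set T)) (c : R) :
  0 <= c -> (forall V, U V -> (diam d V <= c%:E)%E) ->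
  (diam_cover d U <= c%:E)%E.
Proof.
move=> c0 Uc; apply/ereal_supP => _ [->|[V UV <-]]; last exact: Uc.
by rewrite lee_fin.
Qed.

Lemma dist_lt_diam_cover {U : set (set T)} {V} {c : R} {x y} :
  (diam_cover d U < c%:E)%E -> U V -> V x -> V y -> d x y < c.
Proof.
move=> Uc UV Vx Vy; rewrite -lte_fin; apply: le_lt_trans Uc.
apply: le_trans (le_diam Vx Vy) _.
by apply: ereal_sup_ubound; right; exists V.
Qed.

Lemma lebesgue_number_sub {U : set (set T)} {E} :
  (diam d E < lebesgue_number d U)%E -> exists2 V, U V & E `<=` V.
Proof. by move=> /ereal_sup_gt[_ [r [_ rU] <-]]; exact: rU. Qed.

Lemma le_lebesgue_number (U : set (set T)) (r : R) :
  0 <= r -> (forall E, (diam d E < r%:E)%E -> exists2 V, U V & E `<=` V) ->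
  (r%:E <= lebesgue_number d U)%E.
Proof. by move=> r0 rU; apply: ereal_sup_ubound; exists r. Qed.

Lemma Delta_c_le_diam_cover (U : set (set T)) (r : R) :
  is_cover U -> point_finite U -> (r%:E <= lebesgue_number d U)%E ->
  (Delta_c d r <= diam_cover d U)%E.
Proof. by move=> *; apply: ereal_inf_lbound; exists U. Qed.

Lemma Delta_c_lt_cover {r : R} {c : \bar R} : (Delta_c d r < c)%E ->
  exists U, [/\ is_cover U, point_finite U,
    (r%:E <= lebesgue_number d U)%E & (diam_cover d U < c)%E].
Proof. by move=> /ereal_inf_lt[_ [U [? ? ?] <-]] ?; exists U. Qed.

End Diameters.

Definition preimage_cover {X Y : Type} (f : X -> Y) (U : set (set Y))
  : set (set X) := [set f @^-1` V | V in U].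

Section Pullback.
Context {R : realType} {X Y : Type} {dX : X -> X -> R} {dY : Y -> Y -> R}
  {f : X -> Y}.

Lemma is_cover_preimage {U} : is_cover U -> is_cover (preimage_cover f U).
Proof.
move=> covU x; have [V UV Vfx] := covU (f x).
by exists (f @^-1` V) => //; exists V.
Qed.

Lemma point_finite_preimage {U} :
  point_finite U -> point_finite (preimage_cover f U).
Proof.
move=> finU x; apply: (sub_finite_set _ (finite_image (preimage f) (finU (f x)))).
by move=> _ [[V UV <-] Vfx]; exists V.
Qed.

Lemma lebesgue_number_preimage {U} {r w : R} : 0 <= r -> 0 <= w ->
  (forall x1 x2, dX x1 x2 < r -> dY (f x1) (f x2) <= w) ->
  (w%:E < lebesgue_number dY U)%E ->
  (r%:E <= lebesgue_number dX (preimage_cover f U))%E.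
Proof.
move=> r0 w0 fw wU; apply: le_lebesgue_number => // E Er.
have [|V UV fEV] := @lebesgue_number_sub _ _ dY U (f @` E).
  apply: le_lt_trans wU; apply: diam_le => // _ _ [x1 Ex1 <-] [x2 Ex2 <-].
  by apply: fw; rewrite -lte_fin; apply: le_lt_trans (le_diam Ex1 Ex2) Er.
by exists (f @^-1` V); [exists V | move=> x Ex; apply: fEV; exists x].
Qed.

Lemma diam_cover_preimage_le {U} {c t : R} : 0 <= t ->
  (diam_cover dY U < c%:E)%E ->
  (forall x1 x2, dY (f x1) (f x2) < c -> dX x1 x2 <= t) ->
  (diam_cover dX (preimage_cover f U) <= t%:E)%E.
Proof.
move=> t0 Uc ft; apply: diam_cover_le => // _ [V UV <-].
apply: diam_le => // x1 x2 Vx1 Vx2; apply: ft.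
exact: dist_lt_diam_cover Uc UV Vx1 Vx2.
Qed.

(* The slack [w < W] is needed because the Lebesgue number is a supremum:
   only sets of diameter strictly below it are covered. *)
Lemma Delta_c_pullback_le {r w W c t : R} : 0 <= r -> 0 <= w -> w < W -> 0 <= t ->
  (forall x1 x2, dX x1 x2 < r -> dY (f x1) (f x2) <= w) ->
  (Delta_c dY W < c%:E)%E ->
  (forall x1 x2, dY (f x1) (f x2) < c -> dX x1 x2 <= t) ->
  (Delta_c dX r <= t%:E)%E.
Proof.
move=> r0 w0 wW t0 fw DWc ft.
have [U [covU finU WU Uc]] := Delta_c_lt_cover DWc.
apply: le_trans (diam_cover_preimage_le t0 Uc ft).
apply: Delta_c_le_diam_cover.
- exact: is_cover_preimage.
- exact: point_finite_preimage.
- apply: lebesgue_number_preimage fw _ => //.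
  by apply: lt_le_trans WU; rewrite lte_fin.
Qed.

End Pullback.

Section Controls.
Context {R : realType} {X Y : Type} {dX : X -> X -> R} {dY : Y -> Y -> R}
  {f : X -> Y}.

Lemma le_omega_f {t : R} {x1 x2} :
  dX x1 x2 <= t -> ((dY (f x1) (f x2))%:E <= omega_f dX dY f t)%E.
Proof. by move=> x12t; apply: ereal_sup_ubound; exists x1, x2. Qed.

Lemma rho_f_le {t : R} {x1 x2} :
  t <= dX x1 x2 -> (rho_f dX dY f t <= (dY (f x1) (f x2))%:E)%E.
Proof. by move=> tx12; apply: ereal_inf_lbound; exists x1, x2. Qed.

Lemma omega_f_fin_bound {t : R} : (omega_f dX dY f t < +oo)%E ->
  exists2 w, 0 <= w & forall x1 x2, dX x1 x2 <= t -> dY (f x1) (f x2) <= w.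
Proof.
case E : (omega_f dX dY f t) => [w| |] // _.
- exists (Num.max w 0) => [|x1 x2 /le_omega_f]; first by rewrite le_max lexx orbT.
  by rewrite E lee_fin le_max => ->.
- by exists 0 => // x1 x2 /le_omega_f; rewrite E leeNy_eq.
Qed.

Lemma coarse_lipschitz_embedding_bounds : is_metric dX ->
  coarse_lipschitz_embedding dX dY f ->
  exists A B, [/\ 0 < A, 0 <= B &
    forall x1 x2, dY (f x1) (f x2) <= A * dX x1 x2 + B /\
                  dX x1 x2 <= A * (dY (f x1) (f x2) + B)].
Proof.
move=> [dX0 _ _ _] [A [B [A1 B0 fAB]]]; have A0 : 0 < A by apply: lt_le_trans A1.
exists A, B; split=> // x1 x2; have [omega_le le_rho] := fAB _ (dX0 x1 x2).
split; first by rewrite -lee_fin; apply: le_trans omega_le; exact: le_omega_f.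
have := le_trans le_rho (rho_f_le (lexx _)).
by rewrite lee_fin lerBlDr ler_pdivrMr // mulrC.
Qed.

Lemma bilipschitz_embedding_bounds : is_metric dX ->
  bilipschitz_embedding dX dY f ->
  exists2 A, 0 < A & forall x1 x2, dY (f x1) (f x2) <= A * dX x1 x2 /\
                                   dX x1 x2 <= A * dY (f x1) (f x2).
Proof.
move=> [dX0 _ _ _] [A [A1 fA]]; have A0 : 0 < A by apply: lt_le_trans A1.
exists A => // x1 x2; have [omega_le le_rho] := fA _ (dX0 x1 x2).
split; first by rewrite -lee_fin; apply: le_trans omega_le; exact: le_omega_f.
have := le_trans le_rho (rho_f_le (lexx _)).
by rewrite lee_fin ler_pdivrMr // mulrC.
Qed.

End Controls.

Section LipschitzConstants.
Context {R : realType} {T : Type}.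

(* Both [lip] and [lip_inv] unfold to this supremum. *)
Lemma sup_ratio_fin (num den : T -> T -> R) (A : R) : 0 <= A ->
  (forall x, num x x = 0) -> (forall x, 0 <= den x x) ->
  (forall x1 x2, x1 <> x2 -> 0 < den x1 x2) ->
  (forall x1 x2, num x1 x2 <= A * den x1 x2) ->
  exists l, [/\ ereal_sup ([set 0%E] `|` [set r | exists x1 x2,
                  x1 <> x2 /\ r = (num x1 x2 / den x1 x2)%:E]) = l%:E,
              0 <= l & forall x1 x2, num x1 x2 <= l * den x1 x2].
Proof.
move=> A0 num0 den0 den_gt0 numA; set s := ereal_sup _.
have s0 : (0 <= s)%E by apply: ereal_sup_ubound; left.
have sA : (s <= A%:E)%E.
  apply/ereal_supP => _ [->|[x1 [x2 [x12 ->]]]]; first by rewrite lee_fin.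
  by rewrite lee_fin ler_pdivrMr ?den_gt0.
have sfin : s \is a fin_num by rewrite ge0_fin_numE // (le_lt_trans sA) ?ltry.
exists (fine s); split; [by rewrite fineK | exact: fine_ge0 |].
move=> x1 x2; have [<-|x12] := pselect (x1 = x2).
  by rewrite num0 mulr_ge0 ?fine_ge0.
rewrite -ler_pdivrMr ?den_gt0 // -lee_fin fineK //.
by apply: ereal_sup_ubound; right; exists x1, x2.
Qed.

End LipschitzConstants.

Section Embeddings.
Context {R : realType} {X Y : Type} (dX : X -> X -> R) (dY : Y -> Y -> R).

Lemma coarse_stone_coarse_embedding (f : X -> Y) :
  coarse_stone dY -> coarse_embedding dX dY f -> coarse_stone dX.
Proof.
move=> stoneY [omega_fin rho_oo] r r0.
have [w w0 fw] := omega_f_fin_bound (omega_fin _ r0).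
have expand x1 x2 : dX x1 x2 < r -> dY (f x1) (f x2) <= w by move/ltW; exact: fw.
have wW : w < w + 1 by rewrite ltrDl.
have [c Dc] : exists c : R, (Delta_c dY (w + 1) < c%:E)%E.
  move: (stoneY _ (le_trans w0 (ltW wW))).
  case: (Delta_c dY (w + 1)) => [c| |] // _.
  - by exists (c + 1); rewrite lte_fin ltrDl.
  - by exists 0; rewrite ltNyr.
have [t0 rho_c] := rho_oo c.
have t0_ge0 : 0 <= Num.max t0 0 by rewrite le_max lexx orbT.
have compress x1 x2 : dY (f x1) (f x2) < c -> dX x1 x2 <= Num.max t0 0.
  move=> fx12; rewrite le_max leNgt; apply/orP; left; apply/negP => t0x12.
  have := le_trans (rho_c _ (ltW t0x12)) (rho_f_le (lexx _)).
  by rewrite lee_fin leNgt fx12.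
apply: le_lt_trans (Delta_c_pullback_le r0 w0 wW t0_ge0 expand Dc compress) _.
exact: ltry.
Qed.

Lemma Delta_c_affine_coarse_lipschitz (f : X -> Y) (C D : R) :
  is_metric dX -> 0 <= C -> 0 <= D ->
  coarse_lipschitz_embedding dX dY f ->
  (forall r, 0 <= r -> (Delta_c dY r <= (C * r + D)%:E)%E) ->
  exists C' D' : R, [/\ 0 <= C', 0 <= D' &
    forall r, 0 <= r -> (Delta_c dX r < (C' * r + D')%:E)%E].
Proof.
move=> mX C0 D0 /(coarse_lipschitz_embedding_bounds mX)[A [B [A0 B0 fAB]]] DY.
exists (A * A * C), (A * (C * (B + 1) + D + 1 + B) + 1).
have A_ge0 := ltW A0.
have CBD0 : 0 <= C * (B + 1) + D + 1 + B.
  by rewrite !addr_ge0 // mulr_ge0 // addr_ge0.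
split; [exact: mulr_ge0 (mulr_ge0 A_ge0 A_ge0) C0 | by rewrite addr_ge0 ?mulr_ge0 |].
move=> r r0; set w := A * r + B; set c := C * (w + 1) + D + 1.
have w0 : 0 <= w := addr_ge0 (mulr_ge0 A_ge0 r0) B0.
have W0 : 0 <= w + 1 := addr_ge0 w0 ler01.
have wW : w < w + 1 by rewrite ltrDl.
have Dc : (Delta_c dY (w + 1) < c%:E)%E.
  by apply: le_lt_trans (DY _ W0) _; rewrite lte_fin ltrDl.
have c0 : 0 <= c := addr_ge0 (addr_ge0 (mulr_ge0 C0 W0) D0) ler01.
have t0 : 0 <= A * (c + B) := mulr_ge0 A_ge0 (addr_ge0 c0 B0).
have expand x1 x2 : dX x1 x2 < r -> dY (f x1) (f x2) <= w.
  move=> /ltW x12r; apply: le_trans (proj1 (fAB x1 x2)) _.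
  by rewrite lerD2r ler_wpM2l.
have compress x1 x2 : dY (f x1) (f x2) < c -> dX x1 x2 <= A * (c + B).
  move=> /ltW fx12; apply: le_trans (proj2 (fAB x1 x2)) _.
  by rewrite ler_wpM2l ?lerD2r.
apply: le_lt_trans (Delta_c_pullback_le r0 w0 wW t0 expand Dc compress) _.
by rewrite lte_fin /c /w; lra.
Qed.

Lemma Delta_c_le_distortion (f : X -> Y) (C : R) :
  is_metric dX -> is_metric dY -> 0 <= C ->
  bilipschitz_embedding dX dY f ->
  (forall r, 0 <= r -> (Delta_c dY r <= (C * r)%:E)%E) ->
  forall r, 0 <= r -> (Delta_c dX r <= C%:E * distortion dX dY f * r%:E)%E.
Proof.
move=> mX mY C0 /(bilipschitz_embedding_bounds mX)[A A0 fA] DY r r0.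
have [dX0 dXP _ _] := mX; have [dY0 dYP _ _] := mY; rewrite /distortion.
have dX_gt0 x1 x2 : x1 <> x2 -> 0 < dX x1 x2.
  by move=> x12; rewrite lt_def dX0 andbT; apply/eqP => /dXP.
have [lp [-> lp0 flp]] : exists lp, [/\ lip dX dY f = lp%:E, 0 <= lp &
    forall x1 x2, dY (f x1) (f x2) <= lp * dX x1 x2].
  apply: (@sup_ratio_fin _ _ (fun x1 x2 => dY (f x1) (f x2)) dX A (ltW A0)).
  - by move=> x; exact/dYP.
  - by move=> x; exact: dX0.
  - exact: dX_gt0.
  - by move=> x1 x2; case: (fA x1 x2).
have [li [-> li0 fli]] : exists li, [/\ lip_inv dX dY f = li%:E, 0 <= li &
    forall x1 x2, dX x1 x2 <= li * dY (f x1) (f x2)].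
  apply: (@sup_ratio_fin _ _ dX (fun x1 x2 => dY (f x1) (f x2)) A (ltW A0)).
  - by move=> x; exact/dXP.
  - by move=> x; exact: dY0.
  - move=> x1 x2 /dX_gt0 x12; rewrite -(pmulr_rgt0 _ A0).
    by apply: lt_le_trans x12 _; case: (fA x1 x2).
  - by move=> x1 x2; case: (fA x1 x2).
rewrite -!EFinM; apply/lee_addgt0Pr => e e0.
set k := (li + 1) * (C + 1); have k0 : 0 < k by rewrite mulr_gt0 ?ltr_wpDl.
set eps := e / k; have eps0 : 0 < eps by rewrite divr_gt0.
have keps : k * eps = e by rewrite /eps mulrC divfK ?gt_eqF.
set w := lp * r; set c := C * (w + eps) + eps.
have w0 : 0 <= w := mulr_ge0 lp0 r0.
have W0 : 0 <= w + eps := addr_ge0 w0 (ltW eps0).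
have wW : w < w + eps by rewrite ltrDl.
have Dc : (Delta_c dY (w + eps) < c%:E)%E.
  by apply: le_lt_trans (DY _ W0) _; rewrite lte_fin ltrDl.
have t0 : 0 <= li * c := mulr_ge0 li0 (addr_ge0 (mulr_ge0 C0 W0) (ltW eps0)).
have expand x1 x2 : dX x1 x2 < r -> dY (f x1) (f x2) <= w.
  by move=> /ltW x12r; apply: le_trans (flp x1 x2) _; rewrite ler_wpM2l.
have compress x1 x2 : dY (f x1) (f x2) < c -> dX x1 x2 <= li * c.
  by move=> /ltW fx12; apply: le_trans (fli x1 x2) _; rewrite ler_wpM2l.
apply: le_trans (Delta_c_pullback_le r0 w0 wW t0 expand Dc compress) _.
rewrite -EFinD lee_fin -keps -subr_ge0 /c /w /k.
have -> : C * (lp * li) * r + (li + 1) * (C + 1) * eps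
          - li * (C * (lp * r + eps) + eps) = (C + 1) * eps by ring.
exact: mulr_ge0 (addr_ge0 C0 ler01) (ltW eps0).
Qed.

End Embeddings.

Theorem proposition3p9 (R : realType) (X Y : Type)
  (dX : X -> X -> R) (dY : Y -> Y -> R)
  (hX : is_metric dX) (hY : is_metric dY) :
  [/\
   (forall f : X -> Y,
      coarse_stone dY -> coarse_embedding dX dY f -> coarse_stone dX),
   (forall (f : X -> Y) (C D : R), 0 <= C -> 0 <= D ->
      coarse_lipschitz_embedding dX dY f ->
      (forall R0 : R, 0 <= R0 -> (Delta_c dY R0 <= (C * R0 + D)%:E)%E) ->
      exists C' D' : R, [/\ 0 <= C', 0 <= D' &
        forall R0 : R, 0 <= R0 -> (Delta_c dX R0 < (C' * R0 + D')%:E)%E]) &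
   (forall (f : X -> Y) (C : R), 0 <= C ->
      bilipschitz_embedding dX dY f ->
      (forall R0 : R, 0 <= R0 -> (Delta_c dY R0 <= (C * R0)%:E)%E) ->
      forall R0 : R, 0 <= R0 ->
        (Delta_c dX R0 <= C%:E * distortion dX dY f * R0%:E)%E)].
Proof.
split=> f.
- exact: coarse_stone_coarse_embedding.
- by move=> C D C0 D0; exact: Delta_c_affine_coarse_lipschitz.
- by move=> C C0; exact: Delta_c_le_distortion.
Qed.
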